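(* For any graph $G$ with no isolated vertex and any noncomplete graph $H$ with $\gamma(H)=1$, $\gamma_{(1,0,0)}^s(G\circ H)=\gamma_{(2,1,0)}(G)$.
   Context: All graphs are finite and simple; $\gamma(H)$ is the domination number; $N(v)$ is the open neighbourhood. For an integer $l\ge1$ and $w=(w_0,\dots,w_l)$ with $w_0\ge1$, $w_i\ge0$ integers, a function $f:V(G)\to\{0,\dots,l\}$ is a $w$-dominating function if $\sum_{u\in N(v)}f(u)\ge w_i$ for every vertex $v$ with $f(v)=i$; its weight is $\sum_v f(v)$, and $\gamma_w(G)$ is the minimum weight of a $w$-dominating function. For adjacent $v,u$ with $f(v)=0$, $f(u)>0$, $f_{u\to v}$ is defined by $f_{u\to v}(v)=1$, $f_{u\to v}(u)=f(u)-1$, $f_{u\to v}(x)=f(x)$ otherwise. A $w$-dominating $f$ is secure if for every $v$ with $f(v)=0$ there is $u\in N(v)$ with $f(u)>0$ such that $f_{u\to v}$ is $w$-dominating; $\gamma_w^s(G)$ is the minimum weight of a secure $w$-dominating function. The lexicographic product $G\circ H$ has vertex set $V(G)\times V(H)$, with $(u,v)(x,y)$ an edge iff $ux\in E(G)$, or $u=x$ and $vy\in E(H)$. *)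

From mathcomp Require Import all_boot.
Set Implicit Arguments. Unset Strict Implicit. Unset Printing Implicit Defensive.

Definition simple_graph (T : finType) (e : rel T) : Prop :=
  symmetric e /\ irreflexive e.

Definition no_isolated (T : finType) (e : rel T) : Prop :=
  forall v, exists u, e v u.

Definition noncomplete (T : finType) (e : rel T) : Prop :=
  exists x y, x != y /\ ~~ e x y.

Definition dominating (T : finType) (e : rel T) (D : {set T}) : bool :=
  [forall v, (v \in D) || [exists u in D, e v u]].

Definition domination_number (T : finType) (e : rel T) : nat :=
  \big[minn/#|T|]_(D : {set T} | dominating e D) #|D|.

(* w = (w_0, ..., w_l) is encoded as the sequence w of size l+1;
   f takes values in {0, ..., l}, i.e. f v < size w. *)
Definition nbsum (T : finType) (e : rel T) (f : T -> nat) (v : T) : nat :=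
  \sum_(u | e v u) f u.

Definition wdom (T : finType) (e : rel T) (w : seq nat) (f : T -> nat) : bool :=
  [forall v, (f v < size w) && (nth 0 w (f v) <= nbsum e f v)].

Definition weight (T : finType) (f : T -> nat) : nat := \sum_v f v.

Definition fmove (T : finType) (f : T -> nat) (u v : T) : T -> nat :=
  fun x => if x == v then 1 else if x == u then (f u).-1 else f x.

Definition secure_wdom (T : finType) (e : rel T) (w : seq nat) (f : T -> nat) : bool :=
  wdom e w f &&
  [forall v, (f v == 0) ==>
     [exists u, [&& e v u, 0 < f u & wdom e w (fmove f u v)]]].

(* The default #|T| * size w exceeds every possible
   weight and is only used if no such function exists. *)
Definition gamma_w (T : finType) (e : rel T) (w : seq nat) : nat :=
  \big[minn/(#|T| * size w)]_(f : {ffun T -> 'I_(size w)} | wdom e w (fun x => nat_of_ord (f x)))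
     weight (fun x => nat_of_ord (f x)).

Definition gamma_ws (T : finType) (e : rel T) (w : seq nat) : nat :=
  \big[minn/(#|T| * size w)]_(f : {ffun T -> 'I_(size w)} | secure_wdom e w (fun x => nat_of_ord (f x)))
     weight (fun x => nat_of_ord (f x)).

Definition lexprod (T U : finType) (eG : rel T) (eH : rel U) : rel (T * U) :=
  fun p q => eG p.1 q.1 || ((p.1 == q.1) && eH p.2 q.2).

(* Let h be a universal vertex of H (it exists since gamma(H) = 1).  A
   (2,1,0)-dominating function g of G is placed on the copies of h, F(v,h) = g v;
   a vertex (v,z) with F(v,z) = 0 is defended from (v,h) when g v > 0, and from
   (u,h) for any neighbour u of v with g u > 0 otherwise, the condition
   "weight 2 on N(v) when g v = 0" being exactly what keeps the moved function
   dominating.  Conversely, if F is secure (1,0,0)-dominating on G o H, two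
   non-adjacent vertices x, y of H give non-adjacent vertices (v,x), (v,y) whose
   neighbourhoods lie in the block N_G[v] x V(H); a defence of (v,x) can only
   keep (v,y) dominated if this block carries weight at least 2, so
   g v := min(2, sum_z F(v,z)) is (2,1,0)-dominating.  Neither construction
   increases the weight. *)
From mathcomp Require Import all_boot all_order zify.
From Stdlib Require Import FunctionalExtensionality.
Set Implicit Arguments. Unset Strict Implicit. Unset Printing Implicit Defensive.
Import Order.TTheory.

Lemma geq_bigminn_cond (I : finType) (P : pred I) (F : I -> nat) idx i :
  P i -> \big[minn/idx]_(j | P j) F j <= F i.
Proof. by rewrite -minEnat -leEnat; apply: bigmin_le_cond. Qed.

Lemma leq_bigminn (I : finType) (P : pred I) (F : I -> nat) idx m :
  m <= idx -> (forall i, P i -> m <= F i) -> m <= \big[minn/idx]_(j | P j) F j.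
Proof. by rewrite -minEnat -leEnat; apply: le_bigmin. Qed.

Lemma sum_gt0P (I : finType) (P : pred I) (F : I -> nat) :
  reflect (exists2 i, P i & 0 < F i) (0 < \sum_(i | P i) F i).
Proof.
apply: (iffP idP) => [|[i Pi Fi]]; last by rewrite (bigD1 i) //= ltn_addr.
rewrite lt0n sum_nat_eq0 => /forallPn [i]; rewrite negb_imply -lt0n => /andP[].
by exists i.
Qed.

Lemma sum_minn_le (I : finType) (P : pred I) (F : I -> nat) k :
  minn k (\sum_(i | P i) F i) <= \sum_(i | P i) minn k (F i).
Proof.
apply: (big_ind2 (fun a b => minn k a <= b)) => [|a b c d|]; rewrite ?minn0 //.
lia.
Qed.

Section Domination.
Variables (V : finType) (e : rel V).

Lemma domination_number1_universal :
  domination_number e = 1 -> exists h, forall z, z != h -> e z h.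
Proof.
move=> dom1.
have [D /andP[Ddom D1]] : exists D, dominating e D && (#|D| <= 1).
  apply/existsP; apply: contraT => /existsPn small.
  have large : forall D, dominating e D -> 1 < #|D|.
    by move=> D Ddom; move: (small D); rewrite Ddom ltnNge.
  suff : 1 < domination_number e by rewrite dom1.
  apply: leq_bigminn => //; rewrite -cardsT; apply: large.
  by apply/forallP => v; rewrite inE.
have /cards1P [h Dh] : #|D| == 1.
  by rewrite eqn_leq D1 -dom1; apply: geq_bigminn_cond.
exists h => z zh; move/forallP: Ddom => /(_ z); rewrite Dh in_set1 (negbTE zh) /=.
by case/existsP => u /andP[/set1P -> ].
Qed.

Lemma wdom_bounded w f : wdom e w f -> forall v, f v < size w.
Proof. by move/forallP => fw v; case/andP: (fw v). Qed.

Lemma wdom100P f :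
  wdom e [:: 1; 0; 0] f <->
  (forall v, f v < 3) /\ (forall v, f v = 0 -> exists2 u, e v u & 0 < f u).
Proof.
split=> [fw | [f3 fdom]].
  split=> [|v f0]; first exact: wdom_bounded fw.
  by move/forallP: fw => /(_ v) /andP[_]; rewrite f0 => /sum_gt0P.
apply/forallP => v; rewrite f3 /=.
case fv: (f v) (f3 v) => [|[|[|n]]] // _.
exact/sum_gt0P/fdom.
Qed.

Lemma wdom210P g :
  wdom e [:: 2; 1; 0] g <-> forall v, g v < 3 /\ 2 - g v <= nbsum e g v.
Proof.
have nthE n : n < 3 -> nth 0 [:: 2; 1; 0] n = 2 - n by case: n => [|[|[|]]].
split=> [/forallP gw v | gw]; first by case/andP: (gw v) => g3; rewrite nthE.
by apply/forallP => v; have [g3 gdom] := gw v; rewrite g3 nthE.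
Qed.

Lemma secure_wdomP w f :
  secure_wdom e w f <->
  wdom e w f /\
  forall v, f v = 0 -> exists u, [/\ e v u, 0 < f u & wdom e w (fmove f u v)].
Proof.
split=> [/andP[fw /forallP fsec] | [fw fsec]].
  split=> // v f0; move: (fsec v); rewrite f0 eqxx => /existsP [u /and3P[]].
  by exists u.
apply/andP; split=> //; apply/forallP => v; apply/implyP => /eqP f0.
by have [u [vu fu fuw]] := fsec v f0; apply/existsP; exists u; rewrite vu fu.
Qed.

Lemma secure_wdom_bounded w f : secure_wdom e w f -> forall v, f v < size w.
Proof. by case/secure_wdomP => /wdom_bounded. Qed.

(* In a block B containing two non-adjacent vertices and their neighbourhoods,
   a total weight of at most 1 would be concentrated on the defender of one of
   them, and moving it leaves the other one undominated. *)
Lemma secure100_sum_ge2 f (B : {pred V}) a b :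
  secure_wdom e [:: 1; 0; 0] f -> a != b -> ~~ e a b -> ~~ e b a ->
  a \in B -> b \in B -> (forall p, e a p -> p \in B) ->
  (forall p, e b p -> p \in B) ->
  1 < \sum_(p in B) f p.
Proof.
move=> /secure_wdomP [_ fsec] ab nab nba aB bB Na Nb.
rewrite ltnNge; apply/negP => sum_le1.
have f_le1 p : p \in B -> f p <= 1.
  by move=> pB; apply: leq_trans sum_le1; rewrite (bigD1 p) //= leq_addr.
have alone p q : p \in B -> q \in B -> p != q -> 0 < f p -> f q = 0.
  move=> pB qB pq fp; suff : f p + f q <= 1 by lia.
  apply: leq_trans sum_le1; rewrite (bigD1 p) //= (bigD1 q) /= ?addnA ?leq_addr //.
  by rewrite qB eq_sym.
wlog fa0 : a b ab nab nba aB bB Na Nb / f a = 0.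
  move=> hwlog; case: (posnP (f a)) => [|fa]; first exact: (hwlog a b).
  by apply: (hwlog b a) => //; [rewrite eq_sym | apply: alone fa].
have [d [ad fd fdw]] := fsec a fa0.
have dB := Na d ad.
have moved0 p : p \in B -> p != a -> fmove f d a p = 0.
  move=> pB pa; rewrite /fmove (negbTE pa).
  case: (eqVneq p d) => [_|pd]; first by have := f_le1 d dB; lia.
  by apply: alone dB pB _ fd; rewrite eq_sym.
have [_ moved_dom] := (wdom100P _).1 fdw.
have [q bq fq] : exists2 q, e b q & 0 < fmove f d a q.
  by apply: moved_dom; apply: moved0; rewrite // eq_sym.
have qa : q != a by apply: contraNneq nba => <-.
by rewrite moved0 ?Nb in fq.
Qed.

Lemma nbsum_gt_witness g v u0 :
  g u0 < nbsum e g v -> exists2 u, e v u && (u != u0) & 0 < g u.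
Proof.
rewrite /nbsum => lt_sum; apply/sum_gt0P.
case: (boolP (e v u0)) => vu0; first by move: lt_sum; rewrite (bigD1 u0) //=; lia.
rewrite (eq_bigl (e v)) ?(leq_ltn_trans _ lt_sum) // => u.
by case: eqP => [->|]; rewrite ?(negbTE vu0) ?andbT.
Qed.

End Domination.

Section MinWeight.
Variables (T : finType) (w : seq nat) (P : (T -> nat) -> bool).
Hypothesis P_bounded : forall f, P f -> forall v, f v < size w.

Let min_weight := \big[minn/(#|T| * size w)]_(f : {ffun T -> 'I_(size w)} |
  P (fun x => nat_of_ord (f x))) weight (fun x => nat_of_ord (f x)).

Lemma min_weight_le f : P f -> min_weight <= weight f.
Proof.
move=> Pf.
pose ff : {ffun T -> 'I_(size w)} := [ffun v => Ordinal (P_bounded Pf v)].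
have ffE : (fun x => nat_of_ord (ff x)) = f.
  by apply: functional_extensionality => v; rewrite ffunE.
by apply: leq_trans (geq_bigminn_cond _ _ (i := ff) _) _; rewrite ffE.
Qed.

Lemma min_weight_ge f0 m :
  P f0 -> (forall f, P f -> m <= weight f) -> m <= min_weight.
Proof.
move=> Pf0 lb; apply: leq_bigminn => [|ff /lb //].
apply: leq_trans (lb _ Pf0) _; rewrite -sum_nat_const.
by apply: leq_sum => v _; apply: ltnW; apply: P_bounded.
Qed.

End MinWeight.

Lemma gamma_w_le (T : finType) (e : rel T) w f :
  wdom e w f -> gamma_w e w <= weight f.
Proof. by rewrite /gamma_w; apply: (min_weight_le (@wdom_bounded T e w)). Qed.

Lemma gamma_w_ge (T : finType) (e : rel T) w f0 m :
  wdom e w f0 -> (forall f, wdom e w f -> m <= weight f) -> m <= gamma_w e w.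
Proof. by rewrite /gamma_w; apply: (min_weight_ge (@wdom_bounded T e w)). Qed.

Lemma gamma_ws_le (T : finType) (e : rel T) w f :
  secure_wdom e w f -> gamma_ws e w <= weight f.
Proof.
by rewrite /gamma_ws; apply: (min_weight_le (@secure_wdom_bounded T e w)).
Qed.

Lemma gamma_ws_ge (T : finType) (e : rel T) w f0 m :
  secure_wdom e w f0 -> (forall f, secure_wdom e w f -> m <= weight f) ->
  m <= gamma_ws e w.
Proof.
by rewrite /gamma_ws; apply: (min_weight_ge (@secure_wdom_bounded T e w)).
Qed.

Section Move.
Variables (V : finType) (f : V -> nat) (u v : V).

Lemma fmove_lt n : 1 < n -> (forall x, f x < n) -> forall x, fmove f u v x < n.
Proof.
move=> n_gt1 f_lt x; rewrite /fmove; case: (x == v) => //; case: (x == u) => //.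
exact: leq_ltn_trans (leq_pred _) (f_lt u).
Qed.

Lemma fmove_tgt : fmove f u v v = 1.
Proof. by rewrite /fmove eqxx. Qed.

Lemma fmove_src : u != v -> fmove f u v u = (f u).-1.
Proof. by rewrite /fmove eqxx => /negbTE ->. Qed.

Lemma fmove_other x : x != u -> x != v -> fmove f u v x = f x.
Proof. by rewrite /fmove => /negbTE -> /negbTE ->. Qed.

End Move.

Section Lexicographic.
Variables (T U : finType) (eG : rel T) (eH : rel U).
Local Notation GH := (lexprod eG eH).

Lemma lexprod_edgeG a b c d : eG a c -> GH (a, b) (c, d).
Proof. by rewrite /lexprod /= => ->. Qed.

Lemma lexprod_edgeH a b d : eH b d -> GH (a, b) (a, d).
Proof. by rewrite /lexprod /= eqxx => ->; rewrite orbT. Qed.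

Lemma lexprod_edge_fst p q : GH p q -> (q.1 == p.1) || eG p.1 q.1.
Proof. by case/orP => [->|/andP[/eqP -> _]]; rewrite ?orbT ?eqxx. Qed.

Definition row_sum (F : T * U -> nat) (v : T) : nat := \sum_z F (v, z).

Lemma weight_row_sum F : weight F = weight (row_sum F).
Proof.
by rewrite /weight (pair_bigA _ (fun v z => F (v, z))); apply: eq_bigr => -[].
Qed.

Lemma block_sum_ge2 F v x y :
  irreflexive eG -> symmetric eH -> x != y -> ~~ eH x y ->
  secure_wdom GH [:: 1; 0; 0] F ->
  1 < \sum_(u | (u == v) || eG v u) row_sum F u.
Proof.
move=> iG sH xy nxy Fsec.
pose B := [pred p : T * U | (p.1 == v) || eG v p.1].
have nonadj a b : ~~ eH a b -> ~~ GH (v, a) (v, b).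
  by move=> nab; rewrite /lexprod /= iG eqxx (negbTE nab).
have inB a p : GH (v, a) p -> p \in B by move/lexprod_edge_fst.
have -> : \sum_(u | (u == v) || eG v u) row_sum F u = \sum_(p in B) F p.
  rewrite /row_sum pair_big_dep.
  by apply: eq_big => [[a b]|[a b] _]; rewrite ?inE ?andbT.
apply: (secure100_sum_ge2 Fsec _ (nonadj x y nxy) _ _ _ (@inB x) (@inB y)).
- by rewrite xpair_eqE eqxx.
- by apply: nonadj; rewrite sH.
- by rewrite inE eqxx.
- by rewrite inE eqxx.
Qed.

Lemma min2_row_sum_wdom F x y :
  irreflexive eG -> symmetric eH -> x != y -> ~~ eH x y ->
  secure_wdom GH [:: 1; 0; 0] F ->
  wdom eG [:: 2; 1; 0] (fun v => minn 2 (row_sum F v)).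
Proof.
move=> iG sH xy nxy Fsec; apply/wdom210P => v; split; first lia.
have := block_sum_ge2 v iG sH xy nxy Fsec; rewrite (bigD1 v) ?eqxx //=.
rewrite (eq_bigl (eG v)) => [|u]; last first.
  by case: eqVneq => [->|]; rewrite ?iG ?andbT.
have := sum_minn_le (eG v) (row_sum F) 2; rewrite /nbsum; lia.
Qed.

Definition lift_at (h : U) (g : T -> nat) (p : T * U) : nat :=
  if p.2 == h then g p.1 else 0.

Lemma row_sum_lift_at h g v : row_sum (lift_at h g) v = g v.
Proof. by rewrite /row_sum /lift_at /= -big_mkcond big_pred1_eq. Qed.

Lemma weight_lift_at h g : weight (lift_at h g) = weight g.
Proof. by rewrite weight_row_sum; apply: eq_bigr => v _; apply: row_sum_lift_at. Qed.

Lemma lexprod_wdom100 h F :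
  (forall z, z != h -> eH z h) -> (forall p, F p < 3) ->
  (forall v, 0 < F (v, h) \/ exists2 u, eG v u & 0 < row_sum F u) ->
  wdom GH [:: 1; 0; 0] F.
Proof.
move=> univ F3 cover; apply/wdom100P; split=> // -[v z] F0.
case: (cover v) => [Fh | [u vu /sum_gt0P [c _ Fc]]]; last first.
  by exists (u, c); rewrite ?lexprod_edgeG.
have zh : z != h by apply: contraTneq Fh => <-; rewrite F0.
by exists (v, h); rewrite ?lexprod_edgeH ?univ.
Qed.

Section Lift.
Variables (h : U) (g : T -> nat).
Hypothesis sG : symmetric eG.
Hypothesis univ : forall z, z != h -> eH z h.
Hypothesis g_wdom : wdom eG [:: 2; 1; 0] g.
Local Notation F := (lift_at h g).

Lemma lift_at_h v : F (v, h) = g v.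
Proof. by rewrite /lift_at /= eqxx. Qed.

Lemma lift_at_lt3 p : F p < 3.
Proof.
by rewrite /lift_at; case: eqP => // _; have [] := (wdom210P _ _).1 g_wdom p.1.
Qed.

Lemma wdom210_nbr v : g v <= 1 -> exists2 u, eG v u & 0 < g u.
Proof.
move=> gv1; apply/sum_gt0P; have [_] := (wdom210P _ _).1 g_wdom v.
by rewrite /nbsum; lia.
Qed.

Lemma lift_at_move_within v z :
  0 < g v -> z != h -> wdom GH [:: 1; 0; 0] (fmove F (v, h) (v, z)).
Proof.
move=> gv zh; set F' := fmove _ _ _.
have hz : (v, h) != (v, z) by rewrite xpair_eqE eqxx eq_sym.
have F'h w : w != v -> F' (w, h) = g w.
  by move=> wv; rewrite /F' fmove_other ?lift_at_h // xpair_eqE (negbTE wv).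
have F'v : F' (v, h) = (g v).-1 by rewrite /F' fmove_src ?lift_at_h.
have rows u : 0 < g u -> 0 < row_sum F' u.
  move=> gu; apply/sum_gt0P; case: (eqVneq u v) => [->|uv].
    by exists z; rewrite //= /F' fmove_tgt.
  by exists h; rewrite ?F'h.
apply: (@lexprod_wdom100 h) => // [|w].
  by apply: fmove_lt => //; apply: lift_at_lt3.
case: (posnP (F' (w, h))) => [F'w0|]; [right | by left].
have gw1 : g w <= 1.
  by case: (eqVneq w v) F'w0 => [->|/F'h ->]; rewrite ?F'v; lia.
by have [u wu gu] := wdom210_nbr gw1; exists u; rewrite ?rows.
Qed.

Lemma lift_at_move_across u0 v z :
  eG v u0 -> g v = 0 -> 0 < g u0 -> wdom GH [:: 1; 0; 0] (fmove F (u0, h) (v, z)).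
Proof.
move=> vu0 gv gu0; set F' := fmove _ _ _.
have u0v : u0 != v by apply: contraTneq gu0 => ->; rewrite gv.
have F'h w : w != u0 -> w != v -> F' (w, h) = g w.
  move=> wu0 wv; rewrite /F' fmove_other ?lift_at_h // xpair_eqE.
  - by rewrite (negbTE wu0).
  - by rewrite (negbTE wv).
have F'u0 : F' (u0, h) = (g u0).-1.
  by rewrite /F' fmove_src ?lift_at_h // xpair_eqE (negbTE u0v).
have rows u : 0 < g u -> u != u0 \/ 1 < g u0 -> 0 < row_sum F' u.
  move=> gu alt; apply/sum_gt0P; exists h => //.
  have uv : u != v by apply: contraTneq gu => ->; rewrite gv.
  by case: (eqVneq u u0) alt => [-> [|g2]|uu0 _]; rewrite ?F'u0 ?F'h //; lia.
apply: (@lexprod_wdom100 h) => // [|w].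
  by apply: fmove_lt => //; apply: lift_at_lt3.
case: (eqVneq w u0) => [->|wu0].
  case: (leqP 2 (g u0)) => g2; first by left; rewrite F'u0; lia.
  right; exists v; first by rewrite sG.
  by apply/sum_gt0P; exists z; rewrite //= /F' fmove_tgt.
case: (posnP (g w)) => gw; last first.
  by left; rewrite F'h //; apply: contraTneq gw => ->; rewrite gv.
right; have [_] := (wdom210P _ _).1 g_wdom w; rewrite gw => nb2.
case: (leqP 2 (g u0)) => g2.
  have [u wu gu] : exists2 u, eG w u & 0 < g u by apply: wdom210_nbr; rewrite gw.
  by exists u => //; apply: rows => //; right.
have [u /andP[wu uu0] gu] := nbsum_gt_witness (u0 := u0) (leq_trans g2 nb2).
by exists u => //; apply: rows => //; left.
Qed.

Lemma lift_at_secure : secure_wdom GH [:: 1; 0; 0] F.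
Proof.
apply/secure_wdomP; split.
  apply: (@lexprod_wdom100 h) => // [|v]; first exact: lift_at_lt3.
  case: (posnP (g v)) => gv; last by left; rewrite lift_at_h.
  have [u vu gu] : exists2 u, eG v u & 0 < g u by apply: wdom210_nbr; rewrite gv.
  by right; exists u; rewrite ?row_sum_lift_at.
move=> [v z] F0; case: (posnP (g v)) => gv.
  have [u vu gu] : exists2 u, eG v u & 0 < g u by apply: wdom210_nbr; rewrite gv.
  by exists (u, h); rewrite lexprod_edgeG ?lift_at_h ?lift_at_move_across.
have zh : z != h by apply/eqP => zh; move: F0; rewrite zh lift_at_h; lia.
by exists (v, h); rewrite lexprod_edgeH ?univ ?lift_at_h ?lift_at_move_within.
Qed.

End Lift.

End Lexicographic.

Theorem theorem15 (T U : finType) (eG : rel T) (eH : rel U) :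
  simple_graph eG -> simple_graph eH ->
  no_isolated eG -> noncomplete eH -> domination_number eH = 1 ->
  gamma_ws (lexprod eG eH) [:: 1; 0; 0] = gamma_w eG [:: 2; 1; 0].
Proof.
move=> [sG iG] [sH _] _ [x [y [xy nxy]]] /domination_number1_universal [h univ].
have const2_wdom : wdom eG [:: 2; 1; 0] (fun _ => 2) by apply/forallP.
apply/eqP; rewrite eqn_leq; apply/andP; split.
- apply: (gamma_w_ge const2_wdom) => g g_wdom.
  by rewrite -(weight_lift_at h); apply/gamma_ws_le/lift_at_secure.
- apply: (gamma_ws_ge (lift_at_secure sG univ const2_wdom)) => F F_secure.
  apply: leq_trans (gamma_w_le (min2_row_sum_wdom iG sH xy nxy F_secure)) _.
  by rewrite weight_row_sum; apply: leq_sum => v _; apply: geq_minr.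
Qed.
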